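(* Let $m$ be a universal probability and let $M$ be a universal semi-POVM. Then there exist $c_1>0$ and $c_2>0$ such that for every density matrix $\rho\in\mathrm{Her}(N)$ and every $s\in\Sigma^*$, $$c_1\,m(s)\le\operatorname{tr}(\rho M(s))\le c_2\,m(s).$$
   Context: $N$ is a fixed positive integer; $\Sigma^*$ is the set of finite binary strings. $\mathrm{Her}(N)$ is the set of $N\times N$ Hermitian matrices and $\mathrm{Her}_Q(N)$ those with entries in $\{a+ib:a,b\in\mathbb{Q}\}$; $A\leqslant B$ means $B-A$ is positive semi-definite. A density matrix is $\rho\in\mathrm{Her}(N)$, $0\leqslant\rho$, $\operatorname{tr}\rho=1$. A lower-computable semi-measure is a function $r:\Sigma^*\to[0,\infty)$ with $\sum_s r(s)\le 1$ such that there is a total recursive $f:\mathbb{N}\times\Sigma^*\to\mathbb{Q}$ with $\lim_{n}f(n,s)=r(s)$ and $f(n,s)\le f(n+1,s)$ for all $n,s$. A universal probability is a lower-computable semi-measure $m$ such that for every lower-computable semi-measure $r$ there is $c>0$ with $c\,r(s)\le m(s)$ for all $s$. A semi-POVM on $\Sigma^*$ is a map $R:\Sigma^*\to\mathrm{Her}(N)$ with $0\leqslant R(s)$ for all $s$ and $\sum_s R(s)\leqslant I$. A lower-computable semi-POVM is a semi-POVM $R$ for which there is a total recursive $f:\mathbb{N}\times\Sigma^*\to\mathrm{Her}_Q(N)$ with $\lim_{n}f(n,s)=R(s)$ and $f(n,s)\leqslant R(s)$ for all $n,s$. A universal semi-POVM is a lower-computable semi-POVM $M$ such that for every lower-computable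 semi-POVM $R$ there is $c>0$ with $c\,R(s)\leqslant M(s)$ for all $s\in\Sigma^*$. *)

From HB Require Import structures.
From mathcomp Require Import all_boot all_order all_algebra.
From mathcomp Require Import reals.
From mathcomp Require Import complex.

Set Implicit Arguments.
Unset Strict Implicit.
Unset Printing Implicit Defensive.

Import Order.TTheory GRing.Theory Num.Theory.
Local Open Scope ring_scope.

Inductive recf : Type :=
| RZero : recf
| RSucc : recf
| RProj : nat -> recf
| RComp : recf -> list recf -> recf
| RPrim : recf -> recf -> recf
| RMu : recf -> recf.

(* [ev p v y]: program [p] on argument list [v] halts with output [y].
   Extra arguments are ignored (this does not change the class of
   computable functions). *)
Inductive ev : recf -> seq nat -> nat -> Prop :=
| ev_zero v : ev RZero v 0
| ev_succ x v : ev RSucc (x :: v) x.+1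
| ev_proj i v : (i < size v)%N -> ev (RProj i) v (nth 0%N v i)
| ev_comp f gs v ws y : evl gs v ws -> ev f ws y -> ev (RComp f gs) v y
| ev_prim0 f g v y : ev f v y -> ev (RPrim f g) (0%N :: v) y
| ev_primS f g n v z y :
    ev (RPrim f g) (n :: v) z -> ev g (n :: z :: v) y ->
    ev (RPrim f g) (n.+1 :: v) y
| ev_mu f v n :
    ev f (n :: v) 0 ->
    (forall m, (m < n)%N -> exists k, ev f (m :: v) k.+1) ->
    ev (RMu f) v n
with evl : list recf -> seq nat -> seq nat -> Prop :=
| evl_nil v : evl nil v [::]
| evl_cons g gs v y ys : ev g v y -> evl gs v ys -> evl (g :: gs) v (y :: ys).

Definition total_recursive (g : nat -> nat) : Prop :=
  exists p : recf, forall x, ev p [:: x] (g x).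

Definition computable (A B : countType) (f : A -> B) : Prop :=
  exists g : nat -> nat, total_recursive g /\ forall a, g (pickle a) = pickle (f a).

Definition computable2 (B : countType) (f : nat -> seq bool -> B) : Prop :=
  computable (fun p : nat * seq bool => f p.1 p.2).

Section Defs.
Variable R : realType.

(* sum_s r(s) <= 1, for a nonnegative family: every finite subsum <= 1 *)
Definition semi_measure (r : seq bool -> R) : Prop :=
  (forall s, 0 <= r s) /\
  (forall S : seq (seq bool), uniq S -> \sum_(s <- S) r s <= 1).

Definition lower_computable_semi_measure (r : seq bool -> R) : Prop :=
  semi_measure r /\
  exists f : nat -> seq bool -> rat,
    computable2 f /\
    (forall n s, f n s <= f n.+1 s) /\
    (forall s (e : R), 0 < e -> exists n0, forall n, (n0 <= n)%N ->
        `|ratr (f n s) - r s| < e).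

Definition universal_probability (m : seq bool -> R) : Prop :=
  lower_computable_semi_measure m /\
  forall r, lower_computable_semi_measure r ->
    exists c : R, 0 < c /\ forall s, c * r s <= m s.

Local Open Scope complex_scope.

Definition adjmx (k l : nat) (A : 'M[R[i]]_(k, l)) : 'M[R[i]]_(l, k) :=
  (map_mx Num.conj A)^T.

Definition hermitian (N : nat) (A : 'M[R[i]]_N) : Prop := adjmx A = A.

Definition psd (N : nat) (A : 'M[R[i]]_N) : Prop :=
  hermitian A /\ forall v : 'cV[R[i]]_N, 0 <= (adjmx v *m A *m v) 0 0.

Definition loewner (N : nat) (A B : 'M[R[i]]_N) : Prop := psd (B - A).

Definition density_matrix (N : nat) (rho : 'M[R[i]]_N) : Prop :=
  hermitian rho /\ psd rho /\ \tr rho = 1.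

(* Her_Q(N): entries a + ib with a b rational, coded as pairs (a, b) *)
Definition Qmx (N : nat) (F : 'M[rat * rat]_N) : 'M[R[i]]_N :=
  \matrix_(i, j) ((ratr (F i j).1) +i* (ratr (F i j).2)).

(* sum_s R(s) <= I : every finite partial sum is <= I *)
Definition semi_POVM (N : nat) (Rm : seq bool -> 'M[R[i]]_N) : Prop :=
  (forall s, psd (Rm s)) /\
  (forall S : seq (seq bool), uniq S -> loewner (\sum_(s <- S) Rm s) 1%:M).

Definition lower_computable_semi_POVM (N : nat) (Rm : seq bool -> 'M[R[i]]_N)
  : Prop :=
  semi_POVM Rm /\
  exists f : nat -> seq bool -> 'M[rat * rat]_N,
    computable2 f /\
    (forall n s, hermitian (Qmx (f n s))) /\
    (forall s (e : R), 0 < e -> exists n0, forall n, (n0 <= n)%N ->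
        forall i j, `|Qmx (f n s) i j - Rm s i j| < e%:C) /\
    (forall n s, loewner (Qmx (f n s)) (Rm s)).

Definition universal_semi_POVM (N : nat) (M : seq bool -> 'M[R[i]]_N) : Prop :=
  lower_computable_semi_POVM M /\
  forall Rm : seq bool -> 'M[R[i]]_N, lower_computable_semi_POVM Rm ->
    exists c : R, 0 < c /\ forall s, loewner (c%:C *: Rm s) (M s).

End Defs.

(* For every density matrix, 0 <= tr(rho B) <= tr B when B >= 0.  Upper
   bound: each diagonal entry s |-> Re M(s)_ii of a lower-computable semi-POVM
   is a lower-computable semi-measure (approximate it by running maxima of the
   diagonal entries of the approximations), hence is dominated by m; summing
   over i gives tr M(s) <= c2 m(s).  Lower bound: s |-> m(s) I is a
   lower-computable semi-POVM, so universality of M gives c1 m(s) I <= M(s),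
   and tracing against rho gives c1 m(s) <= tr(rho M(s)). *)

From Pilot Require Import Defs.
From HB Require Import structures.
From mathcomp Require Import all_boot all_order all_algebra zify.
From mathcomp Require Import reals complex sesquilinear spectral.

Set Implicit Arguments.
Unset Strict Implicit.
Unset Printing Implicit Defensive.

Import Order.TTheory GRing.Theory Num.Theory.

Definition recursive (k : nat) (F : seq nat -> nat) : Prop :=
  exists p : recf, forall v, size v = k -> ev p v (F v).

Definition recursive1 (f : nat -> nat) : Prop := recursive 1 (fun v => f (nth 0 v 0)).

Definition recursive_pred (k : nat) (P : seq nat -> bool) : Prop :=
  recursive k (fun v => nat_of_bool (P v)).

Fixpoint all_recursive (k : nat) (Fs : seq (seq nat -> nat)) : Prop :=
  if Fs is F :: Fs' then recursive k F /\ all_recursive k Fs' else True.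

Fixpoint prim_rec (F0 G : seq nat -> nat) (n : nat) (w : seq nat) : nat :=
  if n is n'.+1 then G (n' :: prim_rec F0 G n' w :: w) else F0 w.

Section BasicRecursive.

Lemma recursive_ext k F G :
  recursive k F -> (forall v, size v = k -> F v = G v) -> recursive k G.
Proof. by case=> p Hp FG; exists p => v Hv; rewrite -FG //; apply: Hp. Qed.

Lemma total_recursiveE g : total_recursive g <-> recursive1 g.
Proof.
split=> [[p Hp]|[p Hp]]; first by exists p => [[|x []]] //= _; apply: Hp.
by exists p => x; apply: (Hp [:: x]).
Qed.

Lemma recursive0 k : recursive k (fun _ => 0).
Proof. by exists RZero => v _; constructor. Qed.

Lemma recursive_proj k i : i < k -> recursive k (fun v => nth 0 v i).
Proof. by move=> ik; exists (RProj i) => v Hv; constructor; rewrite Hv. Qed.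

Lemma recursive1_succ : recursive1 S.
Proof. by exists RSucc => [[|x []]] // _; constructor. Qed.

Lemma recursive_comp k G Fs : recursive (size Fs) G -> all_recursive k Fs ->
  recursive k (fun v => G [seq F v | F <- Fs]).
Proof.
case=> pg Hg HFs.
have [ps Hps] : exists ps, forall v, size v = k -> evl ps v [seq F v | F <- Fs].
  elim: Fs HFs {Hg} => [|F Fs IH] /= => [_|[[p Hp] /IH [ps Hps]]].
    by exists nil => v _; constructor.
  by exists (p :: ps) => v Hv; constructor; [apply: Hp | apply: Hps].
exists (RComp pg ps) => v Hv; econstructor; first exact: Hps.
by apply: Hg; rewrite size_map.
Qed.

Lemma recursive_prim k F0 G : recursive k F0 -> recursive k.+2 G ->
  recursive k.+1 (fun v => prim_rec F0 G (head 0 v) (behead v)).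
Proof.
case=> p0 H0 [pg Hg]; exists (RPrim p0 pg) => [[|n w]] //= [Hw].
elim: n => [|n IH] /=; first by constructor; apply: H0.
by econstructor; [exact: IH | apply: Hg; rewrite /= Hw].
Qed.

Lemma recursive_mu k F : recursive k.+1 F ->
    (forall v, size v = k -> exists n, F (n :: v) = 0) ->
  exists G, recursive k G /\ forall v, size v = k ->
    F (G v :: v) = 0 /\ forall j, j < G v -> F (j :: v) <> 0.
Proof.
case=> p Hp Hex.
pose P v n := (F (n :: v) == 0) || (size v != k).
have exP v : exists n, P v n.
  have [/eqP /Hex [n Fn]|Hv] := boolP (size v == k); last by exists 0; rewrite /P Hv orbT.
  by exists n; rewrite /P Fn.
have minP v : size v = k ->
    F (ex_minn (exP v) :: v) = 0 /\ forall j, j < ex_minn (exP v) -> F (j :: v) <> 0.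
  move=> Hv; case: ex_minnP => n; rewrite /P Hv eqxx orbF => /eqP Fn Hmin.
  split=> // j jn Fj; have := Hmin j; rewrite Fj eqxx => /(_ isT).
  by rewrite leqNgt jn.
exists (fun v => ex_minn (exP v)); split=> //.
exists (RMu p) => v Hv; have [Fn Fpos] := minP v Hv.
constructor; first by rewrite -Fn; apply: Hp; rewrite /= Hv.
move=> j /Fpos; case E: (F (j :: v)) => [|y] // _.
by exists y; rewrite -E; apply: Hp; rewrite /= Hv.
Qed.

End BasicRecursive.

Section Arithmetic.

Lemma recursive_app1 k f F : recursive1 f -> recursive k F -> recursive k (fun v => f (F v)).
Proof. by move=> Hf HF; apply: recursive_ext (recursive_comp (Fs := [:: F]) Hf _) _. Qed.

Lemma recursive_app2 k f F1 F2 : recursive 2 (fun v => f (nth 0 v 0) (nth 0 v 1)) ->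
  recursive k F1 -> recursive k F2 -> recursive k (fun v => f (F1 v) (F2 v)).
Proof.
by move=> Hf H1 H2; apply: recursive_ext (recursive_comp (Fs := [:: F1; F2]) Hf _) _.
Qed.

Lemma recursive1_comp f g : recursive1 f -> recursive1 g -> recursive1 (f \o g).
Proof. exact: recursive_app1. Qed.

Lemma recursive1_iter n f : recursive1 f -> recursive1 (iter n f).
Proof.
move=> Hf; elim: n => [|n IH]; first exact: recursive_proj.
by apply: recursive_ext (recursive_app1 Hf IH) _ => v _; rewrite iterS.
Qed.

Lemma recursiveS k F : recursive k F -> recursive k (fun v => (F v).+1).
Proof. exact: recursive_app1 recursive1_succ. Qed.

Lemma recursive_cst k c : recursive k (fun _ => c).
Proof. by elim: c => [|c IH]; [exact: recursive0 | exact: recursiveS]. Qed.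

Lemma recursive_add k F1 F2 :
  recursive k F1 -> recursive k F2 -> recursive k (fun v => F1 v + F2 v).
Proof.
apply: recursive_app2.
have := recursive_prim (recursive_proj (k := 1) (i := 0) isT)
  (recursiveS (recursive_proj (k := 3) (i := 1) isT)).
by move/recursive_ext; apply=> [[|x [|y []]]] // _; elim: x => //= x ->.
Qed.

Lemma recursive_double k F : recursive k F -> recursive k (fun v => (F v).*2).
Proof. by move=> HF; apply: recursive_ext (recursive_add HF HF) _ => v _; rewrite addnn. Qed.

Lemma recursive_mul k F1 F2 :
  recursive k F1 -> recursive k F2 -> recursive k (fun v => F1 v * F2 v).
Proof.
apply: recursive_app2.
have := recursive_prim (recursive0 1)
  (recursive_add (recursive_proj (k := 3) (i := 1) isT) (recursive_proj (k := 3) (i := 2) isT)).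
by move/recursive_ext; apply=> [[|x [|y []]]] // _; elim: x => //= x ->; rewrite mulSn addnC.
Qed.

Lemma recursive_exp2 k F : recursive k F -> recursive k (fun v => 2 ^ F v).
Proof.
apply: recursive_app1.
have := recursive_prim (recursive_cst 0 1)
  (recursive_add (recursive_proj (k := 2) (i := 1) isT) (recursive_proj (k := 2) (i := 1) isT)).
by move/recursive_ext; apply=> [[|x []]] // _; elim: x => //= x ->; rewrite expnS mul2n addnn.
Qed.

Lemma recursive_sub k F1 F2 :
  recursive k F1 -> recursive k F2 -> recursive k (fun v => F1 v - F2 v).
Proof.
move=> H1 H2; apply: (recursive_app2 (f := fun a b => b - a)) H2 H1.
have recursive1_pred : recursive1 predn.
  have := recursive_prim (recursive0 0) (recursive_proj (k := 2) (i := 0) isT).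
  by move/recursive_ext; apply=> [[|[]]].
have := recursive_prim (recursive_proj (k := 1) (i := 0) isT)
  (recursive_app1 recursive1_pred (recursive_proj (k := 3) (i := 1) isT)).
by move/recursive_ext; apply=> [[|x [|y []]]] // _; elim: x => /= [|x ->]; rewrite ?subn0 ?subnS.
Qed.

Lemma recursive_code_cons k F1 F2 : recursive k F1 -> recursive k F2 ->
  recursive k (fun v => 2 ^ F1 v * (F2 v).*2.+1).
Proof.
by move=> H1 H2; apply: recursive_mul (recursive_exp2 H1) (recursiveS (recursive_double H2)).
Qed.

Lemma recursive_code k Fs : all_recursive k Fs ->
  recursive k (fun v => CodeSeq.code [seq F v | F <- Fs]).
Proof.
elim: Fs => [|F Fs IH] /= => [_|[HF /IH HFs]]; first exact: recursive_cst.
exact: recursive_code_cons.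
Qed.

Lemma all_recursive_map (T : Type) k (F : T -> seq nat -> nat) s :
  (forall x, recursive k (F x)) -> all_recursive k (map F s).
Proof. by move=> HF; elim: s => //= x s ->. Qed.

Lemma recursive_code2 k F1 F2 : recursive k F1 -> recursive k F2 ->
  recursive k (fun v => CodeSeq.code [:: F1 v; F2 v]).
Proof. by move=> H1 H2; apply: (recursive_code (Fs := [:: F1; F2])). Qed.

End Arithmetic.

Section Predicates.

Lemma recursive_leq k F1 F2 : recursive k F1 -> recursive k F2 ->
  recursive_pred k (fun v => F1 v <= F2 v).
Proof.
move=> H1 H2; apply: recursive_ext (recursive_sub (recursive_cst k 1) (recursive_sub H1 H2)) _.
by move=> v _; rewrite -subn_eq0; case: (F1 v - F2 v).
Qed.

Lemma recursive_eq k F1 F2 : recursive k F1 -> recursive k F2 ->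
  recursive_pred k (fun v => F1 v == F2 v).
Proof.
move=> H1 H2; apply: recursive_ext (recursive_mul (recursive_leq H1 H2) (recursive_leq H2 H1)) _.
by move=> v _; rewrite eqn_leq; case: (_ <= _); case: (_ <= _).
Qed.

Lemma recursive_or k P1 P2 : recursive_pred k P1 -> recursive_pred k P2 ->
  recursive_pred k (fun v => P1 v || P2 v).
Proof.
move=> H1 H2; apply: recursive_ext (recursive_leq (recursive_cst k 1) (recursive_add H1 H2)) _.
by move=> v _; case: (P1 v); case: (P2 v).
Qed.

Lemma recursive_not k P : recursive_pred k P -> recursive_pred k (fun v => ~~ P v).
Proof.
by move=> H; apply: recursive_ext (recursive_sub (recursive_cst k 1) H) _ => v _; case: (P v).
Qed.

Lemma recursive_if k P F1 F2 : recursive_pred k P -> recursive k F1 -> recursive k F2 ->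
  recursive k (fun v => if P v then F1 v else F2 v).
Proof.
move=> HP H1 H2.
apply: recursive_ext (recursive_add (recursive_mul HP H1) (recursive_mul (recursive_not HP) H2)) _.
by move=> v _; case: (P v); rewrite /= ?mul1n ?mul0n ?addn0.
Qed.

Lemma all_recursive_shift k d :
  all_recursive (k + d) [seq (fun v => nth 0 v (i + d)) | i <- iota 0 k].
Proof.
suff H j : j <= k ->
    all_recursive (k + d) [seq (fun v => nth 0 v (i + d)) | i <- iota (k - j) j].
  by have := H k (leqnn k); rewrite subnn.
elim: j => [|j IH] // jk /=; split.
  by apply: recursive_proj; rewrite ltn_add2r ltn_subrL /= (leq_trans _ jk).
by have := IH (ltnW jk); rewrite subnS prednK // subn_gt0.
Qed.

Lemma map_shift d pre w : size pre = d ->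
  [seq F (pre ++ w) | F <- [seq (fun v => nth 0 v (i + d)) | i <- iota 0 (size w)]] = w.
Proof.
move=> Hpre; rewrite -map_comp -[RHS](mkseq_nth 0 w); apply: eq_map => i /=.
by rewrite nth_cat Hpre ltnNge leq_addl addnK.
Qed.

(* Primitive recursion on the bound, the accumulator being the disjunction so far. *)
Lemma recursive_has_iota k P : recursive_pred k.+1 P ->
  recursive_pred k.+1 (fun v => has (fun j => P (j :: behead v)) (iota 0 (head 0 v).+1)).
Proof.
move=> HP.
pose Fs0 := (fun _ : seq nat => 0) :: [seq (fun v => nth 0 v (i + 0)) | i <- iota 0 k].
have H0 : recursive k (fun w => P [seq F w | F <- Fs0]).
  apply: (recursive_comp (G := fun u => nat_of_bool (P u))); first by rewrite /= size_map size_iota.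
  by split; [exact: recursive0 | have := all_recursive_shift k 0; rewrite addn0].
pose Fs1 := (fun v => (nth 0 v 0).+1) :: [seq (fun v => nth 0 v (i + 2)) | i <- iota 0 k].
have H1 : recursive_pred k.+2 (fun w => (0 < nth 0 w 1) || P [seq F w | F <- Fs1]).
  apply: recursive_or; first exact: recursive_leq (recursive_cst _ 1) (recursive_proj _).
  apply: (recursive_comp (G := fun u => nat_of_bool (P u))); first by rewrite /= size_map size_iota.
  by split; [exact: recursiveS (recursive_proj _) | have := all_recursive_shift k 2; rewrite addn2].
apply: recursive_ext (recursive_prim H0 H1) _ => [[|n w]] //= [Hw].
rewrite /Fs0 /Fs1 -Hw; elim: n => [|n IH].
  by rewrite /= (map_shift (pre := [::])) //= orbF.
rewrite [prim_rec _ _ n.+1 _]/= IH (map_shift (pre := [:: n; _])) //.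
by rewrite lt0b -orbA -[n.+1 in RHS]addn1 iotaD has_cat /= orbF add1n.
Qed.

End Predicates.

Definition hdc (y : nat) : nat := head 0 (CodeSeq.decode y).
Definition tlc (y : nat) : nat := CodeSeq.code (behead (CodeSeq.decode y)).

Section Decoding.

Lemma hdc_code x s : hdc (CodeSeq.code (x :: s)) = x.
Proof. by rewrite /hdc CodeSeq.codeK. Qed.

Lemma tlc_code x s : tlc (CodeSeq.code (x :: s)) = CodeSeq.code s.
Proof. by rewrite /tlc CodeSeq.codeK. Qed.

Lemma code_consE x r : 2 ^ x * r.*2.+1 = CodeSeq.code (x :: CodeSeq.decode r).
Proof. by rewrite /= CodeSeq.decodeK. Qed.

Lemma code_cons_inj x r x' r' : 2 ^ x * r.*2.+1 = 2 ^ x' * r'.*2.+1 -> x = x' /\ r = r'.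
Proof.
by rewrite !code_consE => /(can_inj CodeSeq.codeK) [-> /(can_inj CodeSeq.decodeK)].
Qed.

Lemma code_cons_ge x r : x <= 2 ^ x * r.*2.+1 /\ r <= 2 ^ x * r.*2.+1.
Proof.
split; first by rewrite (leq_trans (ltnW (ltn_expl x (isT : 1 < 2)))) ?leq_pmulr.
by rewrite (leq_trans _ (leq_pmull _ (expn_gt0 2 x))) // -addnn leqW ?leq_addr.
Qed.

Lemma code_cases y : y = 0 \/ exists x r, y = 2 ^ x * r.*2.+1.
Proof.
rewrite -(CodeSeq.decodeK y); case: (CodeSeq.decode y) => [|x s]; [by left | right].
by exists x, (CodeSeq.code s).
Qed.

(* The left argument is found by an unbounded search over [j] whose test,
   "y = enc j t for some t <= y, or j = y", is decidable and true for [j = y]. *)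
Lemma recursive_code_inverse (enc : nat -> nat -> nat) :
    recursive 2 (fun v => enc (nth 0 v 0) (nth 0 v 1)) ->
    (forall j t j' t', enc j t = enc j' t' -> j = j') ->
    (forall j t, j <= enc j t /\ t <= enc j t) ->
  exists f, [/\ recursive1 f, forall j t, f (enc j t) = j & forall y, f y <= y].
Proof.
move=> Henc enc_inj enc_ge.
pose T v := has (fun t => enc (nth 0 v 0) t == nth 0 v 1) (iota 0 (nth 0 v 1).+1)
            || (nth 0 v 0 == nth 0 v 1).
have HT : recursive_pred 2 T.
  apply: recursive_or; last exact: recursive_eq (recursive_proj _) (recursive_proj _).
  have Hdec : recursive_pred 3 (fun v => enc (nth 0 v 1) (nth 0 v 0) == nth 0 v 2).
    apply: recursive_eq (recursive_proj _) => //.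
    exact: recursive_app2 Henc (recursive_proj _) (recursive_proj _).
  have := recursive_comp (k := 2)
    (Fs := [:: fun v => nth 0 v 1; fun v => nth 0 v 0; fun v => nth 0 v 1])
    (recursive_has_iota Hdec).
  by apply; do !split; apply: recursive_proj.
have T_self v : exists n, nat_of_bool (~~ T (n :: v)) = 0.
  by exists (nth 0 v 0); rewrite /T /= eqxx orbT.
have [G [HG Gmin]] := recursive_mu (recursive_not HT) (fun v _ => T_self v).
exists (fun y => G [:: y]); split.
- by apply: recursive_ext HG _ => [[|y []]].
- move=> j t; have [TG Gmin'] := Gmin [:: enc j t] erefl.
  have {}TG : T [:: G [:: enc j t]; enc j t] by move: TG; case: (T _).
  have [Glt|Ggt|//] := ltngtP (G [:: enc j t]) j.
  + case/orP: TG => [/hasP [u _ /eqP /enc_inj] /= Gj|/eqP /= Gy]; first by rewrite Gj ltnn in Glt.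
    by move: Glt; rewrite Gy ltnNge (enc_ge j t).1.
  + have Tj : T [:: j; enc j t].
      apply/orP; left; apply/hasP; exists t; last by rewrite /= eqxx.
      by rewrite mem_iota ltnS (enc_ge j t).2.
    by have := Gmin' j Ggt; rewrite Tj.
- move=> y; have [_ Gmin'] := Gmin [:: y] erefl; rewrite leqNgt; apply/negP => yG.
  by have := Gmin' y yG; rewrite /T /= eqxx orbT.
Qed.

Lemma recursive1_hdc : recursive1 hdc.
Proof.
have [f [Hf fE f_le]] :=
  recursive_code_inverse
    (recursive_code_cons (recursive_proj (k := 2) (i := 0) isT) (recursive_proj (k := 2) (i := 1) isT))
  (fun j t j' t' E => (code_cons_inj E).1) code_cons_ge.
apply: recursive_ext Hf _ => v _; case: (code_cases (nth 0 v 0)) => [->|[x [r ->]]].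
  by apply/eqP; rewrite -leqn0 f_le.
by rewrite fE code_consE hdc_code.
Qed.

Lemma recursive1_tlc : recursive1 tlc.
Proof.
have [f [Hf fE f_le]] := recursive_code_inverse (enc := fun r x => 2 ^ x * r.*2.+1)
  (recursive_code_cons (recursive_proj (k := 2) (i := 1) isT) (recursive_proj (k := 2) (i := 0) isT))
  (fun j t j' t' E => (code_cons_inj E).2)
  (fun j t => let: conj a b := code_cons_ge t j in conj b a).
apply: recursive_ext Hf _ => v _; case: (code_cases (nth 0 v 0)) => [->|[x [r ->]]].
  by apply/eqP; rewrite -leqn0 f_le.
by rewrite fE code_consE tlc_code CodeSeq.decodeK.
Qed.

End Decoding.

Section RationalCodes.

Lemma pickle_pair (A B : countType) (a : A) (b : B) :
  pickle (a, b) = CodeSeq.code [:: pickle a; pickle b].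
Proof. by []. Qed.

Lemma pickle_Posz n : pickle (Posz n) = CodeSeq.code [:: CodeSeq.code [:: n]; 0].
Proof. by []. Qed.

Lemma pickle_Negz n : pickle (Negz n) = CodeSeq.code [:: 0; CodeSeq.code [:: n]].
Proof. by []. Qed.

Lemma pickle_rat (q : rat) : pickle q = CodeSeq.code [:: pickle (numq q); pickle (denq q)].
Proof. by []. Qed.

Lemma pickle_mx (T : countType) m n (A : 'M[T]_(m, n)) : pickle A =
  CodeSeq.code [seq CodeSeq.code [:: pickle ij; pickle (A ij.1 ij.2)]
               | ij <- enum {: 'I_m * 'I_n}].
Proof.
have -> : pickle A = CodeSeq.code (map pickle (val (tfgraph (mx_val A)))) by [].
rewrite /tfgraph /codom /image_mem -map_comp; congr CodeSeq.code; apply: eq_map => ij /=.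
by case: A => f; case: ij.
Qed.

Definition pos_part (c : nat) : nat := if hdc c == 0 then 0 else hdc (hdc c).
Definition neg_part (c : nat) : nat := if hdc c == 0 then (hdc (hdc (tlc c))).+1 else 0.

Lemma code1_neq0 n : CodeSeq.code [:: n] != 0.
Proof. by rewrite /= muln_eq0 negb_or expn_eq0. Qed.

Lemma pos_part_Posz n : pos_part (pickle (Posz n)) = n.
Proof. by rewrite pickle_Posz /pos_part hdc_code (negbTE (code1_neq0 n)) hdc_code. Qed.

Lemma pickle_intE (z : int) : z = ((pos_part (pickle z))%:Z - (neg_part (pickle z))%:Z)%R.
Proof.
case: z => n; rewrite ?pickle_Posz ?pickle_Negz /pos_part /neg_part hdc_code.
  by rewrite (negbTE (code1_neq0 n)) hdc_code subr0.
by rewrite eqxx tlc_code !hdc_code NegzE sub0r.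
Qed.

Lemma recursive_hdc_eq0 : recursive_pred 1 (fun v => hdc (nth 0 v 0) == 0).
Proof.
exact: recursive_eq (recursive_app1 recursive1_hdc (recursive_proj _)) (recursive_cst _ 0).
Qed.

Lemma recursive1_pos_part : recursive1 pos_part.
Proof.
apply: recursive_if recursive_hdc_eq0 (recursive_cst _ 0) _.
exact/(recursive_app1 recursive1_hdc)/(recursive_app1 recursive1_hdc)/recursive_proj.
Qed.

Lemma recursive1_neg_part : recursive1 neg_part.
Proof.
apply: recursive_if recursive_hdc_eq0 _ (recursive_cst _ 0).
exact/recursiveS/(recursive_app1 recursive1_hdc)/(recursive_app1 recursive1_hdc)
  /(recursive_app1 recursive1_tlc)/recursive_proj.
Qed.

(* Cross-multiplied comparison of the codes of a/d and a'/d', with the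
   numerators split into positive and negative parts to stay within nat. *)
Definition rat_code_le (c c' : nat) : bool :=
  let a := pos_part (hdc c) in let b := neg_part (hdc c) in let d := pos_part (hdc (tlc c)) in
  let a' := pos_part (hdc c') in let b' := neg_part (hdc c') in let d' := pos_part (hdc (tlc c')) in
  a * d' + b' * d <= a' * d + b * d'.

Lemma rat_code_le_pickle (q q' : rat) : rat_code_le (pickle q) (pickle q') = (q <= q')%R.
Proof.
rewrite /rat_code_le !pickle_rat !hdc_code !tlc_code !hdc_code.
rewrite -[(q <= q')%R]/(le_rat q q') le_ratE.
have [d ->] : exists d : nat, denq q = Posz d by case: (denq q) (denq_gt0 q) => // d; exists d.
have [d' ->] : exists d' : nat, denq q' = Posz d'.
  by case: (denq q') (denq_gt0 q') => // d'; exists d'.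
rewrite !pos_part_Posz; have := pickle_intE (numq q); have := pickle_intE (numq q').
move: (numq q) (numq q') => z z'.
move: (pos_part (pickle z)) (neg_part (pickle z)) (pos_part (pickle z')) (neg_part (pickle z')).
move=> a b a' b' -> ->.
by apply/idP/idP; lia.
Qed.

Lemma recursive_rat_code_le : recursive_pred 2 (fun v => rat_code_le (nth 0 v 0) (nth 0 v 1)).
Proof.
have P0 : recursive 2 (fun v => nth 0 v 0) by exact: recursive_proj.
have P1 : recursive 2 (fun v => nth 0 v 1) by exact: recursive_proj.
apply: recursive_leq; apply: recursive_add; apply: recursive_mul;
  repeat first [exact: P0 | exact: P1 | apply: (recursive_app1 recursive1_pos_part)
    | apply: (recursive_app1 recursive1_neg_part) | apply: (recursive_app1 recursive1_hdc)
    | apply: (recursive_app1 recursive1_tlc)].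
Qed.

Definition rat_code_max (c c' : nat) : nat := if rat_code_le c c' then c' else c.

Lemma recursive_rat_code_max : recursive 2 (fun v => rat_code_max (nth 0 v 0) (nth 0 v 1)).
Proof. exact: recursive_if recursive_rat_code_le (recursive_proj _) (recursive_proj _). Qed.

Lemma rat_code_max_pickle (q q' : rat) :
  rat_code_max (pickle q) (pickle q') = pickle (Num.max q q').
Proof. by rewrite /rat_code_max rat_code_le_pickle; case: lerP. Qed.

End RationalCodes.

Fixpoint running_max (a : nat -> rat) (n : nat) : rat :=
  if n is n'.+1 then Num.max (running_max a n') (a n) else a 0.

Definition diagq (N : nat) (q : rat) : 'M[rat * rat]_N :=
  \matrix_(i, j) (if i == j then q else 0%R, 0%R).

Section Computable.

Lemma computable_comp (A B C : countType) (f : A -> B) (g : B -> C) :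
  computable f -> computable g -> computable (g \o f).
Proof.
case=> cf [/total_recursiveE Hcf cfE] [cg [/total_recursiveE Hcg cgE]].
exists (cg \o cf); split; first exact/total_recursiveE/recursive1_comp.
by move=> a /=; rewrite cfE cgE.
Qed.

Lemma computable2_comp (B C : countType) (f : nat -> seq bool -> B) (g : B -> C) :
  computable2 f -> computable g -> computable2 (fun n s => g (f n s)).
Proof. exact: computable_comp. Qed.

Lemma computable_id (A : countType) : computable (@id A).
Proof. by exists id; split=> //; apply/total_recursiveE/recursive_proj. Qed.

Lemma computable_cst (A B : countType) (b : B) : computable (fun _ : A => b).
Proof. by exists (fun _ => pickle b); split=> //; apply/total_recursiveE/recursive_cst. Qed.

Lemma computable_pair (A B C : countType) (f : A -> B) (g : A -> C) :
  computable f -> computable g -> computable (fun a => (f a, g a)).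
Proof.
case=> cf [/total_recursiveE Hcf cfE] [cg [/total_recursiveE Hcg cgE]].
exists (fun x => CodeSeq.code [:: cf x; cg x]); split; first exact/total_recursiveE/recursive_code2.
by move=> a; rewrite pickle_pair cfE cgE.
Qed.

Lemma computable_fst (A B : countType) : computable (@fst A B).
Proof.
exists hdc; split; first exact/total_recursiveE/recursive1_hdc.
by case=> a b; rewrite pickle_pair hdc_code.
Qed.

Lemma iter_tlc_code p s : p <= size s -> iter p tlc (CodeSeq.code s) = CodeSeq.code (drop p s).
Proof.
elim: p => [|p IH] Hp; first by rewrite drop0.
by rewrite iterS IH 1?ltnW // (drop_nth 0) // tlc_code.
Qed.

(* The code of a matrix lists its entries in the order of [enum]: the code of
   an entry is read off after dropping the codes of its predecessors. *)
Lemma computable_mx_entry (T : countType) m n (i : 'I_m) (j : 'I_n) :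
  computable (fun A : 'M[T]_(m, n) => A i j).
Proof.
pose p := index (i, j) (enum {: 'I_m * 'I_n}).
have p_lt : p < size (enum {: 'I_m * 'I_n}) by rewrite index_mem mem_enum.
exists (hdc \o tlc \o hdc \o iter p tlc); split.
  apply/total_recursiveE; apply: recursive1_comp (recursive1_iter _ recursive1_tlc).
  apply: recursive1_comp recursive1_hdc.
  exact: recursive1_comp recursive1_hdc recursive1_tlc.
move=> A; rewrite /= pickle_mx iter_tlc_code; last by rewrite size_map ltnW.
rewrite (drop_nth 0); last by rewrite size_map.
by rewrite hdc_code (nth_map (i, j)) // nth_index ?mem_enum // tlc_code hdc_code.
Qed.

Lemma computable_mx (A T : countType) m n (F : 'I_m -> 'I_n -> A -> T) :
  (forall i j, computable (F i j)) -> computable (fun a => (\matrix_(i, j) F i j a)%R).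
Proof.
move=> HF; have /fin_all_exists [c Hc] (ij : 'I_m * 'I_n) := HF ij.1 ij.2.
pose entry_code ij x := CodeSeq.code [:: pickle ij; c ij x].
exists (fun x => CodeSeq.code [seq entry_code ij x | ij <- enum {: 'I_m * 'I_n}]); split.
  apply/total_recursiveE; apply: recursive_ext (recursive_code
    (Fs := [seq (fun v => entry_code ij (nth 0 v 0)) | ij <- enum {: 'I_m * 'I_n}]) _) _.
    apply: all_recursive_map => ij; apply: recursive_code2 (recursive_cst _ _) _.
    by have [/total_recursiveE] := Hc ij.
  by move=> v _; rewrite -map_comp.
move=> a; rewrite pickle_mx; congr CodeSeq.code; apply: eq_map => ij.
by have [_ cE] := Hc ij; rewrite /entry_code cE mxE.
Qed.

Lemma computable_diagq N : computable (diagq N).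
Proof.
apply: computable_mx => i j; apply: computable_pair (computable_cst _ _).
by case: (i == j); [exact: computable_id | exact: computable_cst].
Qed.

Lemma computable2_running_max (f : nat -> seq bool -> rat) :
  computable2 f -> computable2 (fun n s => running_max (f ^~ s) n).
Proof.
case=> g [/total_recursiveE Hg gE].
pose t n c := g (CodeSeq.code [:: n; c]).
have tE n s : t n (pickle s) = pickle (f n s) by rewrite /t -[CodeSeq.code _]/(pickle (n, s)) gE.
pose F0 w := t 0 (nth 0 w 0).
pose G v := rat_code_max (nth 0 v 1) (t (nth 0 v 0).+1 (nth 0 v 2)).
have HF0 : recursive 1 F0.
  exact: recursive_app1 Hg (recursive_code2 (recursive_cst _ 0) (recursive_proj _)).
have HG : recursive 3 G.
  apply: recursive_app2; [exact: recursive_rat_code_max | exact: recursive_proj |].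
  exact: recursive_app1 Hg (recursive_code2 (recursiveS (recursive_proj _)) (recursive_proj _)).
exists (fun x => prim_rec F0 G (hdc x) [:: hdc (tlc x)]); split.
  apply/total_recursiveE.
  apply: recursive_ext (recursive_comp (k := 1)
    (Fs := [:: fun v => hdc (nth 0 v 0); fun v => hdc (tlc (nth 0 v 0))])
    (recursive_prim HF0 HG) _) _ => //=.
  by do !split; [exact: recursive1_hdc | exact: recursive1_comp recursive1_hdc recursive1_tlc].
case=> n s; rewrite pickle_pair hdc_code tlc_code hdc_code.
by elim: n => [|n IH] /=; rewrite /F0 /G /= ?IH tE ?rat_code_max_pickle.
Qed.

End Computable.

Local Open Scope ring_scope.
Local Open Scope complex_scope.

Section PositiveSemidefinite.
Variable R : realType.
Local Notation C := R[i].

Lemma adjmxK m n (A : 'M[C]_(m, n)) : adjmx (adjmx A) = A.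
Proof. by apply/matrixP => i j; rewrite !mxE conjCK. Qed.

Lemma adjmxM m n p (A : 'M[C]_(m, n)) (B : 'M[C]_(n, p)) :
  adjmx (A *m B) = adjmx B *m adjmx A.
Proof. by rewrite /adjmx map_mxM trmx_mul. Qed.

Lemma adjmx_delta n (i : 'I_n) : adjmx (delta_mx 0 i : 'rV[C]_n) = delta_mx i 0.
Proof. by apply/matrixP => j k; rewrite !mxE rmorph_nat; case: (j == i); case: (k == 0). Qed.

Lemma hermitian_hermsymmx n (A : 'M[C]_n) : Defs.hermitian A -> A \is hermsymmx.
Proof. by move=> hA; apply/is_hermitianmxP; rewrite expr0 scale1r -map_trmx; apply/esym. Qed.

Lemma psd_ge0_row n (A : 'M[C]_n) (u : 'rV[C]_n) : psd A -> 0 <= (u *m A *m adjmx u) 0 0.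
Proof. by case=> _ /(_ (adjmx u)); rewrite adjmxK. Qed.

Lemma psd_conj_diag_ge0 n (X B : 'M[C]_n) i : psd B -> 0 <= (X *m B *m adjmx X) i i.
Proof.
move=> /(psd_ge0_row (row i X)); rewrite rowE adjmxM adjmx_delta.
set u : 'rV[C]_n := delta_mx 0 i; set w : 'cV[C]_n := delta_mx i 0.
have -> : u *m X *m B *m (adjmx X *m w) = u *m (X *m B *m adjmx X) *m w by rewrite !mulmxA.
by rewrite -rowE -colE !mxE.
Qed.

Lemma psd_diag_ge0 n (A : 'M[C]_n) i : psd A -> 0 <= A i i.
Proof. by move=> /(psd_conj_diag_ge0 1%:M i); rewrite mul1mx /adjmx map_mx1 trmx1 mulmx1. Qed.

(* Diagonalise [rho = P^* diag(d) P] by a unitary [P]: then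
   [tr (rho B) = sum_i d_i (P B P^* )_ii], a convex combination of the
   nonnegative numbers [(P B P^* )_ii], whose sum is [tr B]. *)
Lemma trace_density_mul n (rho B : 'M[C]_n) : density_matrix rho -> psd B ->
  0 <= \tr (rho *m B) <= \tr B.
Proof.
move=> [rho_herm [rho_psd tr_rho]] B_psd.
have /orthomx_spectralP rhoE := hermitian_normalmx (hermitian_hermsymmx rho_herm).
set P := spectralmx rho in rhoE; set d := spectral_diag rho in rhoE.
have P_inv : invmx P = adjmx P.
  by rewrite /adjmx map_trmx invmx_unitary ?spectral_unitarymx.
have PPadj : P *m adjmx P = 1%:M by rewrite -P_inv mulmxV ?spectral_unit.
have PadjP : adjmx P *m P = 1%:M by rewrite -P_inv mulVmx ?spectral_unit.
have dE : diag_mx d = P *m rho *m adjmx P.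
  by rewrite rhoE P_inv !mulmxA PPadj mul1mx -mulmxA PPadj mulmx1.
have d_ge0 i : 0 <= d 0 i.
  by have := psd_conj_diag_ge0 P i rho_psd; rewrite -dE mxE eqxx mulr1n.
have sum_d : \sum_i d 0 i = 1.
  rewrite -tr_rho -[rho](mulmx1) -PadjP mulmxA mxtrace_mulC mulmxA -dE.
  by rewrite /mxtrace; apply: eq_bigr => i _; rewrite mxE eqxx mulr1n.
have sum_B : \sum_i (P *m B *m adjmx P) i i = \tr B.
  by rewrite -/(mxtrace _) -mulmxA mxtrace_mulC -mulmxA PadjP mulmx1.
have -> : \tr (rho *m B) = \sum_i d 0 i * (P *m B *m adjmx P) i i.
  rewrite rhoE P_inv -!mulmxA mxtrace_mulC -!mulmxA mxtrace_mulC !mulmxA.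
  by rewrite mul_mx_diag /mxtrace; apply: eq_bigr => i _; rewrite mxE mulrC.
rewrite sumr_ge0 => [|i _]; last by rewrite mulr_ge0 ?psd_conj_diag_ge0.
rewrite -sum_B; apply: ler_sum => i _; rewrite ler_piMl ?psd_conj_diag_ge0 //.
by rewrite -sum_d (bigD1 i) //= lerDl sumr_ge0.
Qed.

Lemma hermitian_scalar n (a : R) : Defs.hermitian ((a%:C)%:M : 'M[C]_n).
Proof.
rewrite /Defs.hermitian /adjmx; apply/matrixP => i j; rewrite !mxE rmorphMn eq_sym.
by congr (_ *+ _); apply: conj_Creal; rewrite complex_real.
Qed.

Lemma psd_scalar n (a : R) : 0 <= a -> psd ((a%:C)%:M : 'M[C]_n).
Proof.
move=> a_ge0; split=> [|v]; first exact: hermitian_scalar.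
rewrite mul_mx_scalar -scalemxAl mxE mulr_ge0 ?ler0c // mxE sumr_ge0 // => k _.
by rewrite !mxE mulrC mul_conjC_ge0.
Qed.

Lemma sum_scalar_complex n (I : Type) (r : seq I) (F : I -> R) :
  \sum_(i <- r) ((F i)%:C%:M : 'M[C]_n) = ((\sum_(i <- r) F i)%:C)%:M.
Proof. by rewrite rmorph_sum raddf_sum. Qed.

End PositiveSemidefinite.

Section ComplexReals.
Variable R : realType.
Local Notation C := R[i].

Lemma ReB (x y : C) : complex.Re (x - y) = complex.Re x - complex.Re y.
Proof. by case: x; case: y. Qed.

Lemma Re_sum (I : Type) (r : seq I) (F : I -> C) :
  complex.Re (\sum_(i <- r) F i) = \sum_(i <- r) complex.Re (F i).
Proof. by apply: (big_morph _ _ (erefl : complex.Re 0 = 0)) => [] [? ?] []. Qed.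

Lemma ge0_ReE (z : C) : 0 <= z -> z = (complex.Re z)%:C.
Proof. by move/ger0_real/RRe_real. Qed.

Lemma Re_ge0 (z : C) : 0 <= z -> 0 <= complex.Re z.
Proof. by move=> z_ge0; rewrite -ler0c -ge0_ReE. Qed.

Lemma normcR (x : R) : `|x%:C| = `|x|%:C.
Proof. by rewrite normc_def /= expr0n addr0 sqrtr_sqr. Qed.

Lemma norm_Re_lt (z : C) (e : R) : `|z| < e%:C -> `|complex.Re z| < e.
Proof. by rewrite -ltcR; apply: le_lt_trans (normc_ge_Re z). Qed.

End ComplexReals.

Lemma ratr_le_lim (R : realFieldType) (f : nat -> rat) (r : R) :
    (forall n, (f n <= f n.+1)%R) ->
    (forall e : R, 0 < e -> exists n0, forall n, (n0 <= n)%N -> `|ratr (f n) - r| < e) ->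
  forall n, ratr (f n) <= r.
Proof.
move=> f_incr f_cvg n; rewrite leNgt; apply/negP => r_lt.
have [n0 Hn0] : exists n0, forall k, (n0 <= k)%N -> `|ratr (f k) - r| < ratr (f n) - r.
  by apply: f_cvg; rewrite subr_gt0.
have f_le : ratr (f n) <= ratr (f (n + n0)) :> R.
  by rewrite ler_rat (homo_leq le_refl (@le_trans _ _) f_incr) ?leq_addr.
have := Hn0 _ (leq_addl n n0); rewrite ger0_norm ?subr_ge0 ?(le_trans (ltW r_lt)) //.
by rewrite ltNge lerD2r f_le.
Qed.

Section Universality.
Variable R : realType.
Local Notation C := R[i].

Lemma Qmx_diagq N (q : rat) : Qmx R (diagq N q) = ((ratr q : R)%:C)%:M.
Proof. by apply/matrixP => i j; rewrite !mxE; case: (i == j); rewrite /= ?rmorph0. Qed.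

Lemma lower_computable_semi_POVM_scalar N (r : seq bool -> R) :
  lower_computable_semi_measure r ->
  lower_computable_semi_POVM (fun s => ((r s)%:C)%:M : 'M[C]_N).
Proof.
case=> [[r_ge0 r_sum] [f [f_comp [f_incr f_cvg]]]].
split.
  split=> [s|S S_uniq]; first exact: psd_scalar.
  rewrite /loewner sum_scalar_complex -[1%:M]/((1%:C)%:M : 'M[C]_N).
  by rewrite -raddfB -rmorphB; apply: psd_scalar; rewrite subr_ge0 r_sum.
exists (fun n s => diagq N (f n s)); split; first exact: computable2_comp (computable_diagq N).
split=> [n s|]; first by rewrite Qmx_diagq; apply: hermitian_scalar.
split=> [s e e_gt0|n s].
  have [n0 Hn0] := f_cvg s e e_gt0; exists n0 => n n0n i j.
  rewrite Qmx_diagq !mxE; case: (i == j); rewrite /= ?mulr1n ?mulr0n.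
    by rewrite -rmorphB normcR ltcR Hn0.
  by rewrite subrr normr0 ltcR.
rewrite /loewner Qmx_diagq -raddfB -rmorphB; apply: psd_scalar; rewrite subr_ge0.
exact: (ratr_le_lim (f := f ^~ s) (f_incr ^~ s) (f_cvg s)).
Qed.

Lemma lower_computable_semi_measure_diag N (Rm : seq bool -> 'M[C]_N) (i : 'I_N) :
  lower_computable_semi_POVM Rm -> lower_computable_semi_measure (fun s => complex.Re (Rm s i i)).
Proof.
case=> [[Rm_psd Rm_sum] [f [f_comp [_ [f_cvg f_le]]]]].
split.
  split=> [s|S S_uniq]; first exact/Re_ge0/psd_diag_ge0.
  have := psd_diag_ge0 i (Rm_sum S S_uniq); rewrite !mxE summxE eqxx mulr1n.
  by move/Re_ge0; rewrite ReB Re_sum subr_ge0.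
pose a s k := (f k s i i).1.
exists (fun n s => running_max (a s) n); split.
  apply: (computable2_running_max (f := fun k s => (f k s i i).1)).
  have entry_fst : computable (fun A : 'M[rat * rat]_N => (A i i).1).
    exact: (computable_comp (computable_mx_entry (rat * rat)%type i i)
                            (computable_fst rat rat)).
  exact: computable2_comp f_comp entry_fst.
split=> [n s|s e e_gt0]; first by rewrite /= le_max lexx.
have a_le k : ratr (a s k) <= complex.Re (Rm s i i).
  by have := psd_diag_ge0 i (f_le k s); rewrite mxE => /Re_ge0; rewrite mxE ReB /Qmx mxE subr_ge0.
have max_le n : ratr (running_max (a s) n) <= complex.Re (Rm s i i).
  elim: n => [|n IH] /=; first exact: a_le.
  by case: (lerP (running_max (a s) n) (a s n.+1)) => _; [exact: a_le | exact: IH].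
have max_ge n : (a s n <= running_max (a s) n)%R.
  by case: n => [|n] //=; rewrite le_max lexx orbT.
have [n0 Hn0] := f_cvg s e e_gt0; exists n0 => n n0n.
have := norm_Re_lt (Hn0 n n0n i i); rewrite mxE ReB /=.
rewrite !ler0_norm ?subr_le0 ?a_le ?max_le // => /(le_lt_trans _); apply.
by rewrite lerN2 lerD2r ler_rat max_ge.
Qed.

Lemma scalar_le_universal_semi_POVM N (r : seq bool -> R) (M : seq bool -> 'M[C]_N) :
    lower_computable_semi_measure r -> universal_semi_POVM M ->
  exists c, 0 < c /\ forall s, psd (M s - ((c * r s)%:C)%:M).
Proof.
move=> /(lower_computable_semi_POVM_scalar N) r_POVM [_ /(_ _ r_POVM) [c [c_gt0 cM]]].
by exists c; split=> // s; have := cM s; rewrite /loewner scale_scalar_mx -rmorphM.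
Qed.

Lemma trace_le_universal_probability N (N_gt0 : (0 < N)%N) (m : seq bool -> R)
    (Rm : seq bool -> 'M[C]_N) :
    universal_probability m -> lower_computable_semi_POVM Rm ->
  exists c, 0 < c /\ forall s, \tr (Rm s) <= (c * m s)%:C.
Proof.
move=> [_ m_univ] Rm_comp.
have /fin_all_exists [c c_dom] i := m_univ _ (lower_computable_semi_measure_diag i Rm_comp).
exists (\sum_i (c i)^-1); split.
  rewrite (bigD1 (Ordinal N_gt0)) //= ltr_wpDr ?invr_gt0 ?(c_dom _).1 //.
  by rewrite sumr_ge0 // => i _; rewrite invr_ge0 ltW ?(c_dom _).1.
move=> s; rewrite /mxtrace (eq_bigr (fun i => (complex.Re (Rm s i i))%:C)); last first.
  by move=> i _; apply/ge0_ReE/psd_diag_ge0; case: Rm_comp => [[]].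
rewrite -rmorph_sum lecR mulr_suml; apply: ler_sum => i _.
by have [c_gt0 /(_ s)] := c_dom i; rewrite ler_pdivlMl.
Qed.

End Universality.

Theorem mainTheorem8 (R : realType) (N : nat) (hN : (0 < N)%N)
  (m : seq bool -> R) (M : seq bool -> 'M[R[i]]_N) :
  universal_probability m -> universal_semi_POVM M ->
  exists c1 c2 : R, 0 < c1 /\ 0 < c2 /\
    forall (rho : 'M[R[i]]_N) (s : seq bool), density_matrix rho ->
      (c1 * m s)%:C <= \tr (rho *m M s) /\ \tr (rho *m M s) <= (c2 * m s)%:C.
Proof.
move=> m_univ M_univ.
have [c1 [c1_gt0 c1M]] := scalar_le_universal_semi_POVM m_univ.1 M_univ.
have [c2 [c2_gt0 M_c2]] := trace_le_universal_probability hN m_univ M_univ.1.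
exists c1, c2; do 2!split=> //; move=> rho s rho_dens; split.
  have /andP[+ _] := trace_density_mul rho_dens (c1M s).
  rewrite mulmxBr mul_mx_scalar linearB /= mxtraceZ subr_ge0.
  by case: rho_dens => _ [_ ->]; rewrite mulr1.
have /andP[_ le_tr] := trace_density_mul rho_dens (M_univ.1.1.1 s).
exact: le_trans le_tr (M_c2 s).
Qed.
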